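(* Let $f_\infty:[0,1]\to\mathbb{R}$ be the function defined in the context. Then for every Lebesgue measurable set $S\subset[0,1]$, $$\mathcal{H}^1\big(\{(x,f_\infty(x)):x\in S\}\big)\le |S|.$$ In particular $\mathcal{H}^1(\{(x,f_\infty(x)):x\in[0,1]\})\le 1$, and $f_\infty$ satisfies Luzin's condition: $\mathcal{H}^1(\{(x,f_\infty(x)):x\in N\})=0$ for every Lebesgue null set $N\subset[0,1]$.
   Context: Construction. Let $f:\mathbb{R}\to\mathbb{R}$ be $f(x)=0$ for $x\in[0,\tfrac12)+\mathbb{Z}$ and $f(x)=\tfrac34$ for $x\in[\tfrac12,1)+\mathbb{Z}$. Let $g:\mathbb{N}\to\mathbb{R}_+$ be strictly increasing with $g(k)\to\infty$, and set $a_1=g(1)$, $a_k=\min\{1,g(k)-g(k-1)\}$ for $k\ge2$ (so $a_k>0$ and $\sum_k a_k=\infty$). Let $(m_k)_{k\ge1}$ be positive integers with $m_k>m_{k-1}$, $1000\cdot4^{-m_k}\le a_k4^{-m_{k-1}}$ and $1000\cdot4^{-m_k}\le a_{k-1}4^{-m_{k-1}}$ for all $k\ge2$. For $n\in\{1,2,\dots\}\cup\{\infty\}$ define $f_n:[0,1]\to\mathbb{R}$ by $f_n(x)=f(2x)+\sum_{j=1}^{n}a_j4^{-m_j}f(2\cdot4^{m_j}x)$. *)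

From Stdlib Require Import Reals Lra Lia.
Open Scope R_scope.

Definition fstep (x : R) : R :=
  if Rlt_dec (frac_part x) (1/2) then 0 else 3/4.

Definition acoef (g : nat -> R) (k : nat) : R :=
  match k with
  | O => 0
  | S O => g 1%nat
  | S k' => Rmin 1 (g k - g k')
  end.

Definition fterm (g : nat -> R) (m : nat -> nat) (j : nat) (x : R) : R :=
  acoef g j / (4 ^ m j) * fstep (2 * 4 ^ m j * x).

Fixpoint psum (g : nat -> R) (m : nat -> nat) (n : nat) (x : R) : R :=
  match n with
  | O => 0
  | S n' => psum g m n' x + fterm g m n x
  end.

Definition f_n (g : nat -> R) (m : nat -> nat) (n : nat) (x : R) : R :=
  fstep (2 * x) + psum g m n x.

Definition f_inf_graph_rel (g : nat -> R) (m : nat -> nat) (x y : R) : Prop :=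
  Un_cv (fun n => psum g m n x) (y - fstep (2 * x)).

Definition graph_over (g : nat -> R) (m : nat -> nat) (S : R -> Prop)
  : R * R -> Prop :=
  fun p => S (fst p) /\ f_inf_graph_rel g m (fst p) (snd p).

Definition dist2 (p q : R * R) : R :=
  sqrt ((fst p - fst q) ^ 2 + (snd p - snd q) ^ 2).

(* H^1(A) <= M  (unnormalized 1-dim Hausdorff measure = sup_delta H^1_delta,
   H^1_delta(A) = inf of sum diam U_i over countable covers by sets of
   diameter <= delta).  Here d i is an upper bound for diam (U i). *)
Definition H1_le (A : R * R -> Prop) (M : R) : Prop :=
  forall delta eps : R, 0 < delta -> 0 < eps ->
  exists (U : nat -> R * R -> Prop) (d : nat -> R),
    (forall i, 0 <= d i <= delta) /\
    (forall i p q, U i p -> U i q -> dist2 p q <= d i) /\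
    (forall p, A p -> exists i, U i p) /\
    (forall n, sum_f_R0 d n <= M + eps).

Definition leb_outer_le (S : R -> Prop) (M : R) : Prop :=
  forall eps : R, 0 < eps ->
  exists a b : nat -> R,
    (forall i, a i <= b i) /\
    (forall x, S x -> exists i, a i <= x <= b i) /\
    (forall n, sum_f_R0 (fun i => b i - a i) n <= M + eps).

(* Caratheodory measurability: for every A, lambda*(A) >= lambda*(A∩S) +
   lambda*(A\S) (trivial when lambda*(A) = +oo). *)
Definition leb_measurable (S : R -> Prop) : Prop :=
  forall (A : R -> Prop) (M : R), leb_outer_le A M ->
  exists M1 M2 : R,
    leb_outer_le (fun x => A x /\ S x) M1 /\
    leb_outer_le (fun x => A x /\ ~ S x) M2 /\
    M1 + M2 <= M.

Definition in01 (x : R) : Prop := 0 <= x <= 1.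

From Stdlib Require Import Reals Lra Lia ZArith List Classical IndefiniteDescription.
Open Scope R_scope.

(* With [N_l = 4^(m_l + 1)], the [l]-th term of the series only depends on the
   parity of the level-[l] cell [[w/N_l, (w+1)/N_l)] containing [x], so [f_n] is
   constant on level-[n] cells and [0 <= f_inf - f_n <= tail n < 3.01/N_(n+1)].
   Inside a level-[k] cell, let [P] be the left end of the chain of odd subcells
   of levels [k+1], ..., [k+r].  On [[P, end of cell)], [f_inf] stays within
   [3.1] times the distance to either end of [f_(k+r)(P)], and within
   [tail (k+r)] of it everywhere; trimming [s] off the ends thus shortens the
   horizontal side by [s] while the vertical side is [O(s) + O(tail)], so the
   graph there has diameter at most [(1 + th)] times the length.  Left of [P]
   lie whole smaller cells of total length at most [1/(999 N_k)], covered
   recursively; [D] rounds cover the graph over a cell with total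
   [(1 + th + 2 * 500^(-D))] times its length. *)

Lemma exists_floor (r : R) : exists w : Z, IZR w <= r < IZR w + 1.
Proof.
  exists (up r - 1)%Z. destruct (archimed r). rewrite minus_IZR. simpl. lra.
Qed.

Lemma fstep_cell (w : Z) (t : R) :
  IZR w <= 2 * t < IZR w + 1 -> fstep t = if Z.even w then 0 else 3/4.
Proof.
  intros Hw. unfold fstep, frac_part, Int_part.
  destruct (Z.even w) eqn:E.
  - apply Z.even_spec in E. destruct E as [u ->]. rewrite mult_IZR in Hw. simpl in Hw.
    assert (Hup : up t = (u + 1)%Z)
      by (symmetry; apply tech_up; rewrite plus_IZR; simpl; lra).
    rewrite Hup, minus_IZR, plus_IZR. simpl.
    destruct (Rlt_dec _ _); [reflexivity|lra].
  - assert (Ho : Z.odd w = true) by (rewrite <- Z.negb_even, E; reflexivity).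
    apply Z.odd_spec in Ho. destruct Ho as [u ->].
    rewrite plus_IZR, mult_IZR in Hw. simpl in Hw.
    assert (Hup : up t = (u + 1)%Z)
      by (symmetry; apply tech_up; rewrite plus_IZR; simpl; lra).
    rewrite Hup, minus_IZR, plus_IZR. simpl.
    destruct (Rlt_dec _ _); [lra|reflexivity].
Qed.

Lemma Un_cv_bounds (u : nat -> R) (l a b : R) (n0 : nat) :
  Un_cv u l -> (forall n, (n0 <= n)%nat -> a <= u n <= b) -> a <= l <= b.
Proof.
  intros Hcv Hb.
  assert (Hfar : forall e, 0 < e -> exists n, (n0 <= n)%nat /\ Rabs (u n - l) < e).
  { intros e He. destruct (Hcv e He) as [N HN].
    exists (max N n0). split; [lia|]. apply HN. lia. }
  split; apply Rnot_lt_le; intros Hlt.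
  - destruct (Hfar (a - l)) as [n [Hn Hd]]; [lra|].
    apply Rabs_def2 in Hd. specialize (Hb n Hn). lra.
  - destruct (Hfar (l - b)) as [n [Hn Hd]]; [lra|].
    apply Rabs_def2 in Hd. specialize (Hb n Hn). lra.
Qed.

Lemma last_index_with (Q : nat -> Prop) (k r : nat) : Q k ->
  Q (k + r)%nat \/ exists i, (k <= i < k + r)%nat /\ Q i /\ ~ Q (S i).
Proof.
  intros Hk. induction r as [|r [Hr|[i [Hi HQ]]]].
  - left. rewrite Nat.add_0_r. exact Hk.
  - destruct (classic (Q (k + S r)%nat)) as [HS|HS]; [left; exact HS|].
    right. exists (k + r)%nat. rewrite Nat.add_succ_r in HS. split; [lia|auto].
  - right. exists i. split; [lia|exact HQ].
Qed.

Lemma sum_half_powers n : sum_f_R0 (fun i => (/2) ^ S i) n = 1 - (/2) ^ S n.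
Proof. induction n as [|n IH]; simpl in *; [field|]. rewrite IH. field. Qed.

Lemma dist2_le p q D : 0 <= D ->
  (fst p - fst q) ^ 2 + (snd p - snd q) ^ 2 <= D ^ 2 -> dist2 p q <= D.
Proof.
  intros HD H. unfold dist2. rewrite <- (sqrt_pow2 D HD). apply sqrt_le_1_alt, H.
Qed.

Lemma sum_sq_le_sq_add a b A B : Rabs a <= A -> Rabs b <= B -> a ^ 2 + b ^ 2 <= (A + B) ^ 2.
Proof.
  intros Ha Hb. rewrite <- (pow2_abs a), <- (pow2_abs b).
  pose proof (Rabs_pos a). pose proof (Rabs_pos b). nra.
Qed.

(* Shrinking the horizontal side by [s] saves about [2 e s], more than the
   vertical side can cost: [O(s^2)] from the first bound on [dy] when [s] is
   small, and the second bound otherwise. *)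
Lemma diag_estimate e s th mu dy : 0 < e -> 0 <= s <= e -> 0 < th <= 1 ->
  0 <= mu <= th * e / 2 -> Rabs dy <= 2 * mu + 3.1 * s -> Rabs dy <= e / 300 ->
  (e - s) ^ 2 + dy ^ 2 <= (e * (1 + th)) ^ 2.
Proof.
  intros He Hs Ht Hmu Hdy1 Hdy2. rewrite <- (pow2_abs dy).
  pose proof (Rabs_pos dy). set (a := Rabs dy) in *.
  destruct (Rle_or_lt s (e / 20)).
  - assert (a ^ 2 <= (2 * mu + 3.1 * s) ^ 2) by (apply pow_incr; lra).
    assert ((2 * mu + 3.1 * s) ^ 2 <= 8 * mu ^ 2 + 19.22 * s ^ 2)
      by (pose proof (pow2_ge_0 (2 * mu - 3.1 * s)); nra).
    assert (8 * mu ^ 2 <= 2 * th ^ 2 * e ^ 2) by nra.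
    assert (th ^ 2 <= th) by nra. nra.
  - assert (a ^ 2 <= (e / 300) ^ 2) by (apply pow_incr; lra). nra.
Qed.

Definition piece : Type := ((R * R -> Prop) * R)%type.

Definition empty_piece : piece := (fun _ => False, 0).

Definition piece_ok (d : R) (pc : piece) : Prop :=
  0 <= snd pc <= d /\ forall p q, fst pc p -> fst pc q -> dist2 p q <= snd pc.

Fixpoint total (l : list piece) : R :=
  match l with nil => 0 | pc :: l' => snd pc + total l' end.

Definition covers (A : R * R -> Prop) (l : list piece) (B d : R) : Prop :=
  (forall pc, In pc l -> piece_ok d pc) /\
  (forall p, A p -> exists pc, In pc l /\ fst pc p) /\
  total l <= B.

Lemma total_app l1 l2 : total (l1 ++ l2) = total l1 + total l2.
Proof. induction l1 as [|pc l1 IH]; simpl; [ring|]. rewrite IH. ring. Qed.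

Lemma total_nonneg l : (forall pc, In pc l -> 0 <= snd pc) -> 0 <= total l.
Proof.
  induction l as [|pc l IH]; intros Hpos; simpl; [lra|].
  pose proof (Hpos pc (or_introl eq_refl)).
  assert (0 <= total l) by (apply IH; intros; apply Hpos; right; assumption). lra.
Qed.

Lemma covers_app A1 A2 l1 l2 B1 B2 d : covers A1 l1 B1 d -> covers A2 l2 B2 d ->
  covers (fun p => A1 p \/ A2 p) (l1 ++ l2) (B1 + B2) d.
Proof.
  intros [Hok1 [Hc1 Hs1]] [Hok2 [Hc2 Hs2]]. split; [|split].
  - intros pc Hin. apply in_app_iff in Hin as [Hin|Hin]; auto.
  - intros p [Hp|Hp].
    + destruct (Hc1 p Hp) as [pc [Hin Hpc]]. exists pc. rewrite in_app_iff. auto.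
    + destruct (Hc2 p Hp) as [pc [Hin Hpc]]. exists pc. rewrite in_app_iff. auto.
  - rewrite total_app. lra.
Qed.

Lemma covers_mono A A' l B B' d d' : covers A l B d ->
  (forall p, A' p -> A p) -> B <= B' -> d <= d' -> covers A' l B' d'.
Proof.
  intros [Hok [Hc Hs]] HA HB Hd. split; [|split].
  - intros pc Hin. destruct (Hok pc Hin) as [Hpc Hdiam]. split; [lra|exact Hdiam].
  - intros p Hp. apply Hc, HA, Hp.
  - lra.
Qed.

Lemma covers_nil A B d : (forall p, ~ A p) -> 0 <= B -> covers A nil B d.
Proof.
  intros HA HB. split; [|split]; simpl; try tauto.
  intros p Hp. destruct (HA p Hp).
Qed.

Lemma covers_single A e B d : piece_ok d (A, e) -> e <= B -> covers A ((A, e) :: nil) B d.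
Proof.
  intros Hok He. split; [|split].
  - intros pc [<-|[]]. exact Hok.
  - intros p Hp. exists (A, e). split; [left; reflexivity|exact Hp].
  - simpl. lra.
Qed.

(* The separator [d0] makes [flatten_upto L I] have length at least [I], so
   that the [p]-th entry is already fixed in [flatten_upto L (S p)]. *)
Fixpoint flatten_upto {T : Type} (d0 : T) (L : nat -> list T) (I : nat) : list T :=
  match I with
  | O => nil
  | S I' => flatten_upto d0 L I' ++ (L I' ++ d0 :: nil)
  end.

Section Flatten.

Variables (T : Type) (d0 : T) (L : nat -> list T).

Lemma flatten_upto_length I : (I <= length (flatten_upto d0 L I))%nat.
Proof. induction I; simpl; [lia|]. rewrite !length_app. simpl. lia. Qed.

Lemma flatten_upto_nth p I J : (p < length (flatten_upto d0 L I))%nat -> (I <= J)%nat ->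
  nth p (flatten_upto d0 L J) d0 = nth p (flatten_upto d0 L I) d0.
Proof.
  intros Hp HIJ. induction HIJ as [|J HIJ IH]; [reflexivity|].
  simpl. rewrite app_nth1; [exact IH|].
  apply (Nat.lt_le_trans _ _ _ Hp). clear IH Hp.
  induction HIJ; simpl; [lia|]. rewrite length_app. lia.
Qed.

Lemma in_flatten_upto I x :
  In x (flatten_upto d0 L I) -> x = d0 \/ exists i, In x (L i).
Proof.
  induction I as [|I IH]; simpl; [tauto|].
  rewrite !in_app_iff. intros [Hx|[Hx|[Hx|[]]]]; eauto.
Qed.

Lemma flatten_upto_in I i x : (i < I)%nat -> In x (L i) -> In x (flatten_upto d0 L I).
Proof.
  intros Hi Hx. induction Hi; simpl; rewrite !in_app_iff; auto.
Qed.

End Flatten.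

Lemma sum_nth_le_total (l : list piece) n : (forall pc, In pc l -> 0 <= snd pc) ->
  sum_f_R0 (fun p => snd (nth p l empty_piece)) n <= total l.
Proof.
  revert n. induction l as [|pc l IH]; intros n Hpos.
  - rewrite (sum_eq _ (fun _ => 0)) by (intros [|i] _; reflexivity).
    rewrite sum_cte. simpl. lra.
  - assert (Hl : forall pc, In pc l -> 0 <= snd pc) by (intros; apply Hpos; right; auto).
    destruct n as [|n].
    + simpl. pose proof (total_nonneg l Hl). lra.
    + rewrite decomp_sum by lia. simpl. pose proof (IH n Hl). lra.
Qed.

Lemma total_flatten_upto L n :
  total (flatten_upto empty_piece L (S n)) = sum_f_R0 (fun i => total (L i)) n.
Proof.
  induction n as [|n IH].
  - simpl. rewrite total_app. simpl. ring.
  - change (flatten_upto empty_piece L (S (S n)))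
      with (flatten_upto empty_piece L (S n) ++ (L (S n) ++ empty_piece :: nil)).
    rewrite total_app, IH, total_app. simpl. ring.
Qed.

Lemma H1_le_of_covers (A : R * R -> Prop) (M : R) :
  (forall delta eps, 0 < delta -> 0 < eps ->
     exists (Ai : nat -> R * R -> Prop) (B : nat -> R),
       (forall p, A p -> exists i, Ai i p) /\
       (forall i, exists l, covers (Ai i) l (B i) delta) /\
       (forall n, sum_f_R0 B n <= M + eps)) ->
  H1_le A M.
Proof.
  intros HA delta eps Hd He.
  destruct (HA delta eps Hd He) as [Ai [B [HAi [Hl Hsum]]]].
  set (L := fun i => proj1_sig (constructive_indefinite_description _ (Hl i))).
  assert (HL : forall i, covers (Ai i) (L i) (B i) delta)
    by (intros i; exact (proj2_sig (constructive_indefinite_description _ (Hl i)))).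
  set (F := flatten_upto empty_piece L).
  set (pc_at := fun p => nth p (F (S p)) empty_piece).
  assert (Hlen : forall I, (I <= length (F I))%nat) by (intros I; apply flatten_upto_length).
  assert (Hok : forall I pc, In pc (F I) -> piece_ok delta pc).
  { intros I pc Hin. destruct (in_flatten_upto _ _ L I pc Hin) as [->|[i Hi]].
    - split; simpl; [lra|tauto].
    - apply (proj1 (HL i)), Hi. }
  assert (Hin : forall p, In (pc_at p) (F (S p))).
  { intros p. apply nth_In. pose proof (Hlen (S p)). lia. }
  assert (Hstable : forall p I, (S p <= I)%nat -> nth p (F I) empty_piece = pc_at p).
  { intros p I HpI. apply flatten_upto_nth; [|exact HpI]. apply (Hlen (S p)). }
  exists (fun p => fst (pc_at p)), (fun p => snd (pc_at p)). split; [|split; [|split]].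
  - intros i. apply (Hok _ _ (Hin i)).
  - intros i. apply (Hok _ _ (Hin i)).
  - intros p Hp. destruct (HAi p Hp) as [i Hi].
    destruct (proj1 (proj2 (HL i)) p Hi) as [pc [Hpc Hp']].
    destruct (In_nth _ _ empty_piece (flatten_upto_in _ empty_piece L (S i) i pc
      (le_n _) Hpc)) as [q [Hq Eq]].
    exists q. rewrite <- (Hstable q (max (S q) (S i))) by lia.
    unfold F. rewrite (flatten_upto_nth _ _ _ q (S i)) by lia. rewrite Eq. exact Hp'.
  - intros n.
    assert (E : sum_f_R0 (fun p => snd (pc_at p)) n
                = sum_f_R0 (fun p => snd (nth p (F (S n)) empty_piece)) n)
      by (apply sum_eq; intros p Hp; rewrite Hstable by lia; reflexivity).
    rewrite E. eapply Rle_trans; [apply sum_nth_le_total|].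
    { intros pc Hpc. apply (Hok _ _ Hpc). }
    unfold F. rewrite total_flatten_upto.
    eapply Rle_trans; [|apply (Hsum n)]. apply sum_Rle. intros i _. apply (HL i).
Qed.

Section Construction.

Variables (g : nat -> R) (m : nat -> nat).
Hypothesis g_pos : forall k, (1 <= k)%nat -> 0 < g k.
Hypothesis g_incr : forall k, (1 <= k)%nat -> g k < g (S k).
Hypothesis m_pos : forall k, (1 <= k)%nat -> (1 <= m k)%nat.
Hypothesis m_incr : forall k, (2 <= k)%nat -> (m (pred k) < m k)%nat.
Hypothesis m_cond1 : forall k, (2 <= k)%nat ->
  1000 / 4 ^ m k <= acoef g k / 4 ^ m (pred k).
Hypothesis m_cond2 : forall k, (2 <= k)%nat ->
  1000 / 4 ^ m k <= acoef g (pred k) / 4 ^ m (pred k).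

Lemma acoef_pos k : (1 <= k)%nat -> 0 < acoef g k.
Proof.
  intros Hk. destruct k as [|[|k]]; [lia| |].
  - apply g_pos. lia.
  - apply Rmin_glb_lt; [lra|].
    assert (g (S k) < g (S (S k))) by (apply g_incr; lia). lra.
Qed.

Lemma acoef_le_1 k : (2 <= k)%nat -> acoef g k <= 1.
Proof. intros Hk. destruct k as [|[|k]]; [lia|lia|apply Rmin_l]. Qed.

Definition grid_exp (l : nat) : nat := match l with O => O | _ => m l end.
Definition scale (l : nat) : R := 4 * 4 ^ grid_exp l.
Definition refine (k t : nat) : Z := (4 ^ Z.of_nat (grid_exp t - grid_exp k))%Z.

Lemma grid_exp_lt_S l : (grid_exp l < grid_exp (S l))%nat.
Proof.
  destruct l as [|l]; simpl.
  - pose proof (m_pos 1%nat). lia.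
  - pose proof (m_incr (S (S l))). simpl in *. destruct l; lia.
Qed.

Lemma grid_exp_le l t : (l <= t)%nat -> (grid_exp l <= grid_exp t)%nat.
Proof. induction 1 as [|t _ IH]; [lia|]. pose proof (grid_exp_lt_S t). lia. Qed.

Lemma grid_exp_lt l t : (l < t)%nat -> (grid_exp l < grid_exp t)%nat.
Proof.
  intros Hl. pose proof (grid_exp_lt_S l). pose proof (grid_exp_le (S l) t Hl). lia.
Qed.

Lemma le_grid_exp l : (l <= grid_exp l)%nat.
Proof. induction l; [simpl; lia|]. pose proof (grid_exp_lt_S l). lia. Qed.

Lemma scale_pos l : 0 < scale l.
Proof. unfold scale. pose proof (pow_lt 4 (grid_exp l)). lra. Qed.

Lemma inv_scale_pos l : 0 < / scale l.
Proof. apply Rinv_0_lt_compat, scale_pos. Qed.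

Lemma refine_ge_1 k t : (1 <= refine k t)%Z.
Proof.
  unfold refine. pose proof (Z.pow_pos_nonneg 4 (Z.of_nat (grid_exp t - grid_exp k))). lia.
Qed.

Lemma IZR_refine_pos k t : 0 < IZR (refine k t).
Proof. apply IZR_lt. pose proof (refine_ge_1 k t). lia. Qed.

Lemma scale_refine k t : (k <= t)%nat -> scale t = IZR (refine k t) * scale k.
Proof.
  intros Hkt. unfold refine, scale. rewrite <- pow_IZR.
  pose proof (grid_exp_le k t Hkt).
  replace (grid_exp t) with ((grid_exp t - grid_exp k) + grid_exp k)%nat at 1 by lia.
  rewrite pow_add. ring.
Qed.

Lemma refine_even k t : (k < t)%nat -> Z.even (refine k t) = true.
Proof.
  intros Hkt. pose proof (grid_exp_lt k t Hkt).
  unfold refine. rewrite Z.even_pow by lia. reflexivity.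
Qed.

Lemma scale_le l t : (l <= t)%nat -> scale l <= scale t.
Proof.
  intros Hlt. rewrite (scale_refine l t Hlt).
  pose proof (scale_pos l). assert (1 <= IZR (refine l t)) by (apply IZR_le, refine_ge_1).
  nra.
Qed.

Lemma inv_scale_le l t : (l <= t)%nat -> / scale t <= / scale l.
Proof. intros Hlt. apply Rinv_le_contravar; [apply scale_pos | apply scale_le, Hlt]. Qed.

Lemma inv_scale_eventually_le eps : 0 < eps ->
  exists n, forall l, (n <= l)%nat -> / scale l <= eps.
Proof.
  intros He. destruct (pow_lt_1_zero (/4) ltac:(rewrite Rabs_pos_eq; lra) eps He) as [N HN].
  exists N. intros l Hl. pose proof (le_grid_exp l).
  specialize (HN (grid_exp l) ltac:(lia)). rewrite Rabs_pos_eq in HN by (apply pow_le; lra).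
  unfold scale. rewrite Rinv_mult, <- pow_inv. lra.
Qed.

Lemma scale_S_ge k : (1 <= k)%nat -> 1000 * scale k <= scale (S k).
Proof.
  intros Hk. pose proof (m_cond1 (S k) ltac:(lia)) as C. simpl pred in C.
  pose proof (acoef_le_1 (S k) ltac:(lia)). pose proof (acoef_pos (S k) ltac:(lia)).
  unfold scale. destruct k as [|k]; [lia|]. simpl grid_exp.
  set (a := 4 ^ m (S k)) in *. set (b := 4 ^ m (S (S k))) in *.
  assert (0 < a) by (apply pow_lt; lra). assert (0 < b) by (apply pow_lt; lra).
  assert (E : 1000 / b <= 1 / a).
  { eapply Rle_trans; [exact C|]. unfold Rdiv. apply Rmult_le_compat_r; [|lra].
    left; apply Rinv_0_lt_compat; lra. }
  unfold Rdiv in E. apply Rmult_le_compat_r with (r := a * b) in E; [|nra].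
  replace (1000 * / b * (a * b)) with (1000 * a) in E by (field; lra).
  replace (1 * / a * (a * b)) with b in E by (field; lra). lra.
Qed.

Lemma inv_scale_S_le k : (1 <= k)%nat -> / scale (S k) <= / 1000 * / scale k.
Proof.
  intros Hk. rewrite <- Rinv_mult. apply Rinv_le_contravar.
  - pose proof (scale_pos k). lra.
  - apply scale_S_ge, Hk.
Qed.

Definition in_cell (l : nat) (w : Z) (x : R) : Prop := IZR w <= scale l * x < IZR w + 1.
Definition same_cell (l : nat) (x y : R) : Prop := exists w, in_cell l w x /\ in_cell l w y.
Definition same_parity (l : nat) (x y : R) : Prop :=
  exists w w', in_cell l w x /\ in_cell l w' y /\ Z.even w = Z.even w'.

Definition amp (l : nat) : R := acoef g l / 4 ^ m l * (3/4).

Lemma fstep_double_cell w x : in_cell 0 w x -> fstep (2 * x) = if Z.even w then 0 else 3/4.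
Proof. unfold in_cell, scale. simpl. intros Hc. apply fstep_cell. lra. Qed.

Lemma fterm_cell l w x : (1 <= l)%nat -> in_cell l w x ->
  fterm g m l x = if Z.even w then 0 else amp l.
Proof.
  intros Hl Hc. unfold fterm, amp. rewrite (fstep_cell w).
  - destruct (Z.even w); ring.
  - unfold in_cell, scale in Hc. destruct l; [lia|]. simpl grid_exp in Hc. lra.
Qed.

Lemma cell_of x l : exists w, in_cell l w x.
Proof. apply exists_floor. Qed.

Lemma same_cell_S l x y : same_cell (S l) x y -> same_cell l x y.
Proof.
  intros [w [Hx Hy]]. destruct (cell_of x l) as [t Ht].
  exists t. split; [exact Ht|].
  pose proof (scale_refine l (S l) ltac:(lia)) as Hs.
  pose proof (IZR_refine_pos l (S l)). set (q := refine l (S l)) in *.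
  unfold in_cell in *. rewrite Hs in Hx, Hy.
  assert (Hlo : (q * t <= w)%Z).
  { apply Z.lt_succ_r, lt_IZR. rewrite mult_IZR, <- Z.add_1_r, plus_IZR. simpl. nra. }
  assert (Hhi : (w + 1 <= q * (t + 1))%Z).
  { apply Zlt_le_succ, lt_IZR. rewrite mult_IZR, plus_IZR. simpl. nra. }
  apply IZR_le in Hlo. apply IZR_le in Hhi.
  rewrite mult_IZR in Hlo. rewrite plus_IZR, mult_IZR, plus_IZR in Hhi. simpl in Hhi.
  split; nra.
Qed.

Lemma same_cell_le l l' x y : (l <= l')%nat -> same_cell l' x y -> same_cell l x y.
Proof. induction 1 as [|l' _ IH]; auto. intros Hs. apply IH, same_cell_S, Hs. Qed.

Lemma same_cell_parity l x y : same_cell l x y -> same_parity l x y.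
Proof. intros [w [Hx Hy]]. exists w, w. auto. Qed.

Lemma f_n_same_parity n x y :
  (forall t, (t <= n)%nat -> same_parity t x y) -> f_n g m n x = f_n g m n y.
Proof.
  intros Hpar. unfold f_n. f_equal.
  - destruct (Hpar 0%nat ltac:(lia)) as [w [w' [Hx [Hy Hw]]]].
    rewrite (fstep_double_cell w x Hx), (fstep_double_cell w' y Hy), Hw. reflexivity.
  - induction n as [|n IH]; simpl; [reflexivity|].
    rewrite IH by (intros; apply Hpar; lia). f_equal.
    destruct (Hpar (S n) ltac:(lia)) as [w [w' [Hx [Hy Hw]]]].
    rewrite (fterm_cell (S n) w x ltac:(lia) Hx), (fterm_cell (S n) w' y ltac:(lia) Hy), Hw.
    reflexivity.
Qed.

Lemma f_n_same_cell n x y : same_cell n x y -> f_n g m n x = f_n g m n y.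
Proof.
  intros Hs. apply f_n_same_parity. intros t Ht.
  apply same_cell_parity, (same_cell_le t n); assumption.
Qed.

Lemma amp_nonneg l : (1 <= l)%nat -> 0 <= amp l.
Proof.
  intros Hl. pose proof (acoef_pos l Hl). pose proof (pow_lt 4 (m l) ltac:(lra)).
  unfold amp, Rdiv. apply Rmult_le_pos; [|lra].
  apply Rmult_le_pos; [lra|]. left; apply Rinv_0_lt_compat; lra.
Qed.

Lemma fterm_bounds l x : (1 <= l)%nat -> 0 <= fterm g m l x <= amp l.
Proof.
  intros Hl. destruct (cell_of x l) as [w Hw].
  rewrite (fterm_cell l w x Hl Hw). pose proof (amp_nonneg l Hl).
  destruct (Z.even w); lra.
Qed.

Lemma amp_S_le l : (1 <= l)%nat -> 1000 * amp (S l) <= amp l.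
Proof.
  intros Hl. pose proof (m_cond2 (S l) ltac:(lia)) as C. simpl pred in C.
  pose proof (acoef_le_1 (S l) ltac:(lia)). pose proof (acoef_pos (S l) ltac:(lia)).
  unfold amp. set (a := 4 ^ m l) in *. set (b := 4 ^ m (S l)) in *.
  assert (0 < a) by (apply pow_lt; lra). assert (0 < b) by (apply pow_lt; lra).
  assert (acoef g (S l) / b <= 1 / b).
  { unfold Rdiv. apply Rmult_le_compat_r; [left; apply Rinv_0_lt_compat|]; lra. }
  assert (1000 * (acoef g (S l) / b) <= acoef g l / a).
  { eapply Rle_trans; [|exact C]. unfold Rdiv in *. nra. }
  nra.
Qed.

Lemma amp_le_inv_scale l : (2 <= l)%nat -> amp l <= 3 * / scale l.
Proof.
  intros Hl. pose proof (acoef_le_1 l Hl). pose proof (acoef_pos l ltac:(lia)).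
  unfold amp, scale. destruct l as [|l]; [lia|]. simpl grid_exp.
  assert (0 < / 4 ^ m (S l)) by (apply Rinv_0_lt_compat, pow_lt; lra).
  unfold Rdiv. rewrite Rinv_mult. nra.
Qed.

(* The factor [1000/999] sums the decay [amp (S l) <= amp l / 1000]. *)
Definition tail (n : nat) : R := 1000/999 * amp (S n).

Lemma tail_nonneg n : 0 <= tail n.
Proof. unfold tail. pose proof (amp_nonneg (S n) ltac:(lia)). lra. Qed.

Lemma psum_tail n N x : (n <= N)%nat ->
  0 <= psum g m N x - psum g m n x <= 1000/999 * (amp (S n) - amp (S N)).
Proof.
  induction 1 as [|N _ IH]; simpl; [lra|].
  pose proof (fterm_bounds (S N) x ltac:(lia)). pose proof (amp_S_le (S N) ltac:(lia)).
  lra.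
Qed.

Lemma f_n_tail n N x : (n <= N)%nat -> 0 <= f_n g m N x - f_n g m n x <= tail n.
Proof.
  intros HnN. unfold f_n, tail. pose proof (psum_tail n N x HnN).
  pose proof (amp_nonneg (S N) ltac:(lia)). lra.
Qed.

Lemma graph_tail x y n : f_inf_graph_rel g m x y -> 0 <= y - f_n g m n x <= tail n.
Proof.
  intros Hr. unfold f_n.
  enough (psum g m n x + 0 <= y - fstep (2 * x) <= psum g m n x + tail n) by lra.
  apply (Un_cv_bounds _ _ _ _ n Hr). intros N HN.
  pose proof (psum_tail n N x HN). pose proof (amp_nonneg (S N) ltac:(lia)).
  unfold tail. lra.
Qed.

Lemma tail_le_inv_scale n : (1 <= n)%nat -> tail n <= 3.01 * / scale (S n).
Proof.
  intros Hn. unfold tail. pose proof (amp_le_inv_scale (S n) ltac:(lia)).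
  pose proof (inv_scale_pos (S n)). nra.
Qed.

Lemma tail_small k : (1 <= k)%nat -> tail k <= 0.00301 * / scale k.
Proof.
  intros Hk. pose proof (tail_le_inv_scale k Hk). pose proof (inv_scale_S_le k Hk). lra.
Qed.

(* [stair_point r k z] is the left end of the level-[(k + r)] cell reached
   from the level-[k] cell [z] by passing [r] times to the second, odd-indexed,
   subcell of the next level. *)
Fixpoint stair_point (r k : nat) (z : Z) : R :=
  match r with
  | O => IZR z / scale k
  | S r' => stair_point r' (S k) (z * refine k (S k) + 1)
  end.

Fixpoint stair_len (r k : nat) : R :=
  match r with O => 0 | S r' => / scale (S k) + stair_len r' (S k) end.

Lemma stair_point_eq r k z : stair_point r k z = IZR z / scale k + stair_len r k.
Proof.
  revert k z. induction r as [|r IH]; intros k z; simpl; [ring|].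
  rewrite IH, plus_IZR, mult_IZR, (scale_refine k (S k)) by lia. simpl.
  pose proof (scale_pos k). pose proof (IZR_refine_pos k (S k)).
  field. lra.
Qed.

Lemma stair_len_bound r k : (1 <= k)%nat -> 0 <= stair_len r k <= 1000/999 * / scale (S k).
Proof.
  revert k. induction r as [|r IH]; intros k Hk; simpl.
  - pose proof (inv_scale_pos (S k)). lra.
  - specialize (IH (S k) ltac:(lia)). pose proof (inv_scale_S_le (S k) ltac:(lia)).
    pose proof (inv_scale_pos (S k)). lra.
Qed.

Lemma stair_len_small r k : (1 <= k)%nat -> 0 <= stair_len r k <= / 999 * / scale k.
Proof.
  intros Hk. pose proof (stair_len_bound r k Hk). pose proof (inv_scale_S_le k Hk). lra.
Qed.

Lemma stair_point_in_cell r k z : (1 <= k)%nat ->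
  IZR z <= scale k * stair_point r k z <= IZR z + 0.002.
Proof.
  intros Hk. rewrite stair_point_eq. pose proof (stair_len_small r k Hk).
  pose proof (scale_pos k).
  replace (scale k * (IZR z / scale k + stair_len r k))
    with (IZR z + scale k * stair_len r k) by (field; lra).
  assert (scale k * stair_len r k <= / 999).
  { replace (/ 999) with (scale k * (/ 999 * / scale k)) by (field; lra).
    apply Rmult_le_compat_l; lra. }
  assert (0 <= scale k * stair_len r k) by (apply Rmult_le_pos; lra). lra.
Qed.

Lemma stair_point_odd r k z : (1 <= k)%nat -> forall l, (k < l <= k + r)%nat ->
  exists w, IZR w <= scale l * stair_point r k z <= IZR w + 0.002 /\ Z.even w = false.
Proof.
  revert k z. induction r as [|r IH]; intros k z Hk l Hl; [lia|]. simpl.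
  destruct (Nat.eq_dec l (S k)) as [->|Hne].
  - exists (z * refine k (S k) + 1)%Z. split; [apply stair_point_in_cell; lia|].
    rewrite Z.even_add, Z.even_mul, refine_even, Bool.orb_true_r by lia. reflexivity.
  - apply IH; lia.
Qed.

Definition right_part (k : nat) (z : Z) (r : nat) (x : R) : Prop :=
  stair_point r k z <= x /\ scale k * x < IZR z + 1.

Lemma right_part_in_cell k z r x : (1 <= k)%nat -> right_part k z r x -> in_cell k z x.
Proof.
  intros Hk [Hx1 Hx2]. pose proof (stair_point_in_cell r k z Hk). unfold in_cell.
  assert (scale k * stair_point r k z <= scale k * x)
    by (apply Rmult_le_compat_l; [left; apply scale_pos | exact Hx1]).
  lra.
Qed.

Lemma right_part_same_cell k z r x : (1 <= k)%nat ->
  right_part k z r x -> same_cell k x (stair_point r k z).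
Proof.
  intros Hk Hx. exists z. split; [apply (right_part_in_cell k z r x Hk Hx)|].
  pose proof (stair_point_in_cell r k z Hk). unfold in_cell. lra.
Qed.

Lemma right_part_lt_end k z r x : right_part k z r x -> x < (IZR z + 1) / scale k.
Proof.
  intros [_ Hx]. pose proof (scale_pos k). unfold Rdiv.
  apply Rmult_lt_reg_l with (scale k); [lra|].
  replace (scale k * ((IZR z + 1) * / scale k)) with (IZR z + 1) by (field; lra). exact Hx.
Qed.

Lemma right_part_length k r z : (1 <= k)%nat ->
  (IZR z + 1) / scale k - stair_point r k z = / scale k - stair_len r k /\
  0.998 * / scale k <= / scale k - stair_len r k <= / scale k.
Proof.
  intros Hk. rewrite stair_point_eq. pose proof (stair_len_small r k Hk).
  pose proof (scale_pos k). pose proof (inv_scale_pos k).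
  split; [field; lra | lra].
Qed.

Lemma graph_dev_le_tail i N x y P : (i <= N)%nat ->
  f_n g m i x = f_n g m i P -> f_inf_graph_rel g m x y ->
  Rabs (y - f_n g m N P) <= tail i.
Proof.
  intros HiN Heq Hr. pose proof (graph_tail x y i Hr). pose proof (f_n_tail i N P HiN).
  apply Rabs_le. lra.
Qed.

Lemma graph_near_stair_point k r z x y : (1 <= k)%nat ->
  right_part k z r x -> f_inf_graph_rel g m x y ->
  Rabs (y - f_n g m (k + r) (stair_point r k z))
    <= tail (k + r) + 3.1 * (x - stair_point r k z).
Proof.
  intros Hk Hx Hr. set (P := stair_point r k z) in *.
  pose proof (tail_nonneg (k + r)). assert (HPx : P <= x) by apply Hx.
  destruct (last_index_with (fun i => same_cell i x P) k r)
    as [Hsame|[i [Hi [Hsame Hsplit]]]]; [apply right_part_same_cell; auto| |].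
  - pose proof (graph_dev_le_tail (k + r) (k + r) x y P (le_n _)
      (f_n_same_cell _ _ _ Hsame) Hr). lra.
  - pose proof (graph_dev_le_tail i (k + r) x y P ltac:(lia)
      (f_n_same_cell _ _ _ Hsame) Hr).
    destruct (stair_point_odd r k z Hk (S i) ltac:(lia)) as [w [Hw _]]. fold P in Hw.
    pose proof (scale_pos (S i)).
    (* [P] sits at the left end of its level-[(S i)] cell, which [x] has left. *)
    assert (Hfar : IZR w + 1 <= scale (S i) * x).
    { apply Rnot_lt_le. intros Hlt. apply Hsplit. exists w. unfold in_cell.
      assert (scale (S i) * P <= scale (S i) * x) by (apply Rmult_le_compat_l; lra).
      lra. }
    assert (0.998 * / scale (S i) <= x - P).
    { apply Rmult_le_reg_l with (scale (S i)); [lra|].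
      replace (scale (S i) * (0.998 * / scale (S i))) with 0.998 by (field; lra). lra. }
    pose proof (tail_le_inv_scale i ltac:(lia)). pose proof (inv_scale_pos (S i)). lra.
Qed.

Lemma in_last_subcell k t z x : (k <= t)%nat ->
  (IZR z + 1) / scale k - / scale t <= x -> scale k * x < IZR z + 1 ->
  in_cell t ((z + 1) * refine k t - 1) x.
Proof.
  intros Hkt Hlo Hhi. unfold in_cell.
  rewrite minus_IZR, mult_IZR, plus_IZR, (scale_refine k t Hkt) in *. simpl.
  pose proof (scale_pos k). pose proof (IZR_refine_pos k t).
  set (q := IZR (refine k t)) in *.
  split.
  - apply Rmult_le_compat_l with (r := q * scale k) in Hlo; [|nra].
    replace (q * scale k * ((IZR z + 1) / scale k - / (q * scale k)))
      with ((IZR z + 1) * q - 1) in Hlo by (field; lra).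
    lra.
  - assert (q * (scale k * x) < q * (IZR z + 1)) by (apply Rmult_lt_compat_l; lra).
    lra.
Qed.

Lemma f_n_near_cell_end k r z x i : (1 <= k)%nat -> (k <= i <= k + r)%nat ->
  (IZR z + 1) / scale k - / scale i <= x -> right_part k z r x ->
  f_n g m i x = f_n g m i (stair_point r k z).
Proof.
  intros Hk Hi Hlo Hx. apply f_n_same_parity. intros t Ht.
  destruct (le_lt_dec t k) as [Htk|Htk].
  - apply same_cell_parity, (same_cell_le t k), right_part_same_cell; auto.
  - destruct (stair_point_odd r k z Hk t ltac:(lia)) as [w [Hw Hodd]].
    exists ((z + 1) * refine k t - 1)%Z, w. split; [|split].
    + apply in_last_subcell; [lia| |apply Hx].
      pose proof (inv_scale_le t i ltac:(lia)). lra.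
    + unfold in_cell. lra.
    + rewrite Hodd, Z.even_sub, Z.even_mul, refine_even, Bool.orb_true_r by lia.
      reflexivity.
Qed.

Lemma graph_near_cell_end k r z x y : (1 <= k)%nat ->
  right_part k z r x -> f_inf_graph_rel g m x y ->
  Rabs (y - f_n g m (k + r) (stair_point r k z))
    <= tail (k + r) + 3.1 * ((IZR z + 1) / scale k - x).
Proof.
  intros Hk Hx Hr. set (P := stair_point r k z) in *. set (v := (IZR z + 1) / scale k).
  pose proof (scale_pos k). pose proof (tail_nonneg (k + r)).
  pose proof (right_part_lt_end k z r x Hx) as Hv. fold v in Hv.
  assert (Hstart : v - / scale k <= x).
  { destruct (right_part_length k r z Hk) as [He _]. fold P v in He.
    pose proof (stair_len_small r k Hk). assert (P <= x) by apply Hx. lra. }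
  destruct (last_index_with (fun i => v - / scale i <= x) k r Hstart)
    as [Hnear|[i [Hi [Hnear Hfar]]]].
  - pose proof (graph_dev_le_tail (k + r) (k + r) x y P (le_n _)
      (f_n_near_cell_end k r z x (k + r) Hk ltac:(lia) Hnear Hx) Hr). lra.
  - pose proof (graph_dev_le_tail i (k + r) x y P ltac:(lia)
      (f_n_near_cell_end k r z x i Hk ltac:(lia) Hnear Hx) Hr).
    pose proof (tail_le_inv_scale i ltac:(lia)). pose proof (inv_scale_pos (S i)).
    lra.
Qed.

Lemma crude_piece k z : (1 <= k)%nat ->
  piece_ok (/ scale k + tail k) (graph_over g m (in_cell k z), / scale k + tail k).
Proof.
  intros Hk. pose proof (tail_nonneg k). pose proof (scale_pos k). pose proof (inv_scale_pos k).
  split; [simpl; lra|]. intros [x y] [x' y'] [Hx Hr] [Hx' Hr']. simpl in *.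
  apply dist2_le; [lra|]. apply sum_sq_le_sq_add; simpl.
  - unfold in_cell in *.
    replace (x - x') with ((scale k * x - scale k * x') * / scale k) by (field; lra).
    apply Rabs_le. split; nra.
  - assert (f_n g m k x = f_n g m k x') by (apply f_n_same_cell; exists z; auto).
    pose proof (graph_tail x y k Hr). pose proof (graph_tail x' y' k Hr').
    apply Rabs_le. lra.
Qed.

Definition cell_covers (th : R) (D : nat) : Prop :=
  forall k z, (1 <= k)%nat -> exists l,
    covers (graph_over g m (in_cell k z)) l ((1 + th + 2 * (/500) ^ D) * / scale k)
      (2 * / scale k).

Lemma cell_covers_0 th : 0 <= th -> cell_covers th 0.
Proof.
  intros Hth k z Hk. eexists.
  pose proof (tail_small k Hk). pose proof (tail_nonneg k). pose proof (inv_scale_pos k).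
  eapply covers_mono; [apply covers_single; [apply crude_piece, Hk | apply Rle_refl]| | |].
  - intros p Hp. exact Hp.
  - simpl. nra.
  - lra.
Qed.

(* A union of whole cells of the levels [k + 1], ..., [k + r]. *)
Definition left_part (k : nat) (z : Z) (r : nat) (x : R) : Prop :=
  IZR z <= scale k * x /\ x < stair_point r k z.

Lemma left_part_cover th D : 0 <= th -> cell_covers th D ->
  forall r k z, (1 <= k)%nat -> exists l,
    covers (graph_over g m (left_part k z r)) l ((1 + th + 2 * (/500) ^ D) * stair_len r k)
      (2 * / scale k).
Proof.
  intros Hth Hcells r. induction r as [|r IH]; intros k z Hk.
  - exists nil. apply covers_nil; [|simpl; lra].
    intros [x y] [[Hx1 Hx2] _]. simpl in *. pose proof (scale_pos k).
    apply Rmult_lt_compat_l with (r := scale k) in Hx2; [|lra].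
    replace (scale k * (IZR z / scale k)) with (IZR z) in Hx2 by (field; lra). lra.
  - set (q := refine k (S k)).
    destruct (Hcells (S k) (z * q)%Z ltac:(lia)) as [l1 C1].
    destruct (IH (S k) (z * q + 1)%Z ltac:(lia)) as [l2 C2].
    exists (l1 ++ l2). pose proof (inv_scale_le k (S k) ltac:(lia)).
    eapply covers_mono; [apply (covers_app _ _ _ _ _ _ _ C1 C2)| | |].
    + intros [x y] [[Hx1 Hx2] Hr]. simpl in *.
      destruct (Rlt_or_le (scale (S k) * x) (IZR (z * q) + 1)) as [Hlt|Hge].
      * left. split; [|exact Hr]. split; [|exact Hlt].
        rewrite (scale_refine k (S k)), mult_IZR by lia. fold q. simpl.
        pose proof (IZR_refine_pos k (S k)) as Hq. fold q in Hq. nra.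
      * right. split; [|exact Hr]. split; [rewrite plus_IZR; exact Hge | exact Hx2].
    + simpl. pose proof (pow_le (/500) D ltac:(lra)). lra.
    + lra.
Qed.

Lemma right_piece_estimate k r z th x y x' y' : (1 <= k)%nat -> 0 < th <= 1 ->
  tail (k + r) <= th * (/ scale k - stair_len r k) / 2 ->
  right_part k z r x -> right_part k z r x' -> x <= x' ->
  f_inf_graph_rel g m x y -> f_inf_graph_rel g m x' y' ->
  (x - x') ^ 2 + (y - y') ^ 2 <= ((/ scale k - stair_len r k) * (1 + th)) ^ 2.
Proof.
  intros Hk Hth Htail Hx Hx' Hxx' Hr Hr'.
  destruct (right_part_length k r z Hk) as [He Hebd].
  set (e := / scale k - stair_len r k) in *. set (P := stair_point r k z) in *.
  set (v := (IZR z + 1) / scale k) in *.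
  pose proof (right_part_lt_end k z r x' Hx') as Hv. fold v in Hv.
  assert (HPx : P <= x) by apply Hx.
  pose proof (graph_near_stair_point k r z x y Hk Hx Hr) as Hleft.
  pose proof (graph_near_cell_end k r z x' y' Hk Hx' Hr') as Hright. fold P v in Hleft, Hright.
  set (mu := tail (k + r)) in *. pose proof (tail_nonneg (k + r)). fold mu in H.
  set (s := (x - P) + (v - x')).
  assert (Hdy1 : Rabs (y' - y) <= 2 * mu + 3.1 * s).
  { replace (y' - y) with ((y' - f_n g m (k + r) P) - (y - f_n g m (k + r) P)) by ring.
    eapply Rle_trans; [apply Rabs_triang|]. rewrite Rabs_Ropp. unfold s. lra. }
  assert (Hdy2 : Rabs (y' - y) <= e / 300).
  { assert (f_n g m k x = f_n g m k x')
      by (apply f_n_same_cell; exists z; split; eapply right_part_in_cell; eauto).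
    pose proof (graph_tail x y k Hr). pose proof (graph_tail x' y' k Hr').
    pose proof (tail_small k Hk). apply Rabs_le. lra. }
  replace ((x - x') ^ 2) with ((e - s) ^ 2) by (unfold s; rewrite <- He; ring).
  replace ((y - y') ^ 2) with ((y' - y) ^ 2) by ring.
  apply (diag_estimate e s th mu); try lra. unfold s. lra.
Qed.

Lemma right_piece_ok k r z th : (1 <= k)%nat -> 0 < th <= 1 ->
  tail (k + r) <= th * (/ scale k - stair_len r k) / 2 ->
  piece_ok (2 * / scale k)
    (graph_over g m (right_part k z r), (/ scale k - stair_len r k) * (1 + th)).
Proof.
  intros Hk Hth Htail. destruct (right_part_length k r z Hk) as [_ Hebd].
  pose proof (inv_scale_pos k). split; simpl; [nra|].
  intros [x y] [x' y'] [Hx Hr] [Hx' Hr']. simpl in *.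
  apply dist2_le; [nra|]. cbn [fst snd].
  destruct (Rle_or_lt x x').
  - apply (right_piece_estimate k r z th x y x' y'); auto.
  - replace ((x - x') ^ 2 + (y - y') ^ 2) with ((x' - x) ^ 2 + (y' - y) ^ 2) by ring.
    apply (right_piece_estimate k r z th x' y' x y); auto. lra.
Qed.

Lemma cell_covers_S th D : 0 < th <= 1 -> cell_covers th D -> cell_covers th (S D).
Proof.
  intros Hth Hcells k z Hk. pose proof (inv_scale_pos k).
  destruct (inv_scale_eventually_le (th * 0.49 * / scale k / 3.01)) as [n Hn].
  { apply Rdiv_lt_0_compat; [apply Rmult_lt_0_compat|]; lra. }
  set (r := S n).
  destruct (right_part_length k r z Hk) as [_ Hebd].
  assert (Htail : tail (k + r) <= th * (/ scale k - stair_len r k) / 2).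
  { pose proof (tail_le_inv_scale (k + r) ltac:(unfold r; lia)).
    specialize (Hn (S (k + r)) ltac:(unfold r; lia)). nra. }
  destruct (left_part_cover th D ltac:(lra) Hcells r k z Hk) as [l1 C1].
  pose proof (covers_single _ _ _ _ (right_piece_ok k r z th Hk Hth Htail) (Rle_refl _)) as C2.
  eexists. eapply covers_mono; [apply (covers_app _ _ _ _ _ _ _ C1 C2)| | |].
  - intros [x y] [Hx Hr]. simpl in Hx. destruct Hx as [Hx1 Hx2].
    destruct (Rlt_or_le x (stair_point r k z)); [left|right]; repeat split; auto.
  - pose proof (stair_len_small r k Hk). pose proof (pow_le (/500) D ltac:(lra)).
    assert ((/500) ^ D * stair_len r k <= (/500) ^ D * (/500 * / scale k))
      by (apply Rmult_le_compat_l; lra).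
    simpl pow. nra.
  - lra.
Qed.

Lemma cell_covers_all th : 0 < th <= 1 -> forall D, cell_covers th D.
Proof.
  intros Hth D. induction D; [apply cell_covers_0; lra | apply cell_covers_S; auto].
Qed.

Lemma cell_covers_small tau : 0 < tau -> exists c, 0 <= c <= tau /\
  forall k z, (1 <= k)%nat -> exists l,
    covers (graph_over g m (in_cell k z)) l ((1 + c) * / scale k) (2 * / scale k).
Proof.
  intros Htau. set (th := Rmin 1 (tau / 2)).
  assert (Hth : 0 < th <= 1) by (split; [apply Rmin_glb_lt|apply Rmin_l]; lra).
  assert (th <= tau / 2) by apply Rmin_r.
  destruct (pow_lt_1_zero (/500) ltac:(rewrite Rabs_pos_eq; lra) (tau / 4)) as [D HD]; [lra|].
  specialize (HD D (le_n D)). rewrite Rabs_pos_eq in HD by (apply pow_le; lra).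
  exists (th + 2 * (/500) ^ D). pose proof (pow_le (/500) D ltac:(lra)).
  split; [lra|]. intros k z Hk. destruct (cell_covers_all th Hth D k z Hk) as [l Hl].
  exists l. rewrite <- Rplus_assoc. exact Hl.
Qed.

Lemma cell_run_cover k C d : 0 <= C ->
  (forall w, exists l, covers (graph_over g m (in_cell k w)) l C d) ->
  forall (cnt : nat) (w0 : Z), exists l,
    covers (graph_over g m (fun x => IZR w0 <= scale k * x < IZR w0 + INR cnt)) l
      (INR cnt * C) d.
Proof.
  intros HC Hcell cnt. induction cnt as [|cnt IH]; intros w0.
  - exists nil. apply covers_nil; [|simpl; lra]. intros [x y] [Hx _]. simpl in Hx. lra.
  - destruct (Hcell w0) as [l1 C1]. destruct (IH (w0 + 1)%Z) as [l2 C2].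
    exists (l1 ++ l2). rewrite S_INR.
    eapply covers_mono; [apply (covers_app _ _ _ _ _ _ _ C1 C2)| | |]; [|lra|lra].
    intros [x y] [Hx Hr]. simpl in Hx.
    destruct (Rlt_or_le (scale k * x) (IZR w0 + 1)); [left|right]; split; auto;
      unfold in_cell; simpl; rewrite ?plus_IZR; simpl; lra.
Qed.

Lemma interval_cover a b d eps : a <= b -> 0 < d -> 0 < eps ->
  exists l, covers (graph_over g m (fun x => a <= x <= b)) l (b - a + eps) d.
Proof.
  intros Hab Hd He. set (K := b - a + 1).
  destruct (cell_covers_small (eps / (2 * K))) as [c [Hc Hcells]].
  { apply Rdiv_lt_0_compat; unfold K; lra. }
  destruct (inv_scale_eventually_le (d / 2)) as [n1 Hn1]; [lra|].
  destruct (inv_scale_eventually_le (eps / 8)) as [n2 Hn2]; [lra|].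
  destruct (inv_scale_eventually_le (1 / 2)) as [n3 Hn3]; [lra|].
  set (k := max 1 (max n1 (max n2 n3))).
  specialize (Hn1 k ltac:(unfold k; lia)). specialize (Hn2 k ltac:(unfold k; lia)).
  specialize (Hn3 k ltac:(unfold k; lia)).
  pose proof (scale_pos k). pose proof (inv_scale_pos k).
  destruct (cell_of a k) as [w0 Hw0]. destruct (cell_of b k) as [w1 Hw1].
  unfold in_cell in Hw0, Hw1.
  assert (scale k * a <= scale k * b) by (apply Rmult_le_compat_l; lra).
  assert (Hw : (w0 <= w1)%Z) by (apply Z.lt_succ_r, lt_IZR; rewrite <- Z.add_1_r, plus_IZR; lra).
  set (cnt := Z.to_nat (w1 - w0 + 1)).
  assert (Hcnt : INR cnt = IZR w1 - IZR w0 + 1).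
  { unfold cnt. rewrite INR_IZR_INZ, Z2Nat.id by lia. rewrite plus_IZR, minus_IZR. reflexivity. }
  assert (Hcell : forall w, exists l,
             covers (graph_over g m (in_cell k w)) l ((1 + c) * / scale k) d).
  { intros w. destruct (Hcells k w ltac:(unfold k; lia)) as [l Hl]. exists l.
    eapply covers_mono; [exact Hl | intros p Hp; exact Hp | apply Rle_refl | lra]. }
  destruct (cell_run_cover k ((1 + c) * / scale k) d ltac:(nra) Hcell cnt w0) as [l Hl].
  exists l. eapply covers_mono; [exact Hl| | |apply Rle_refl].
  - intros [x y] [[Hx1 Hx2] Hr]. split; [|exact Hr]. simpl in *. rewrite Hcnt.
    assert (scale k * a <= scale k * x) by (apply Rmult_le_compat_l; lra).
    assert (scale k * x <= scale k * b) by (apply Rmult_le_compat_l; lra). lra.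
  - set (u := INR cnt * / scale k).
    assert (Hu : u <= b - a + 2 * / scale k).
    { unfold u. rewrite Hcnt.
      replace (b - a + 2 * / scale k) with ((scale k * (b - a) + 2) * / scale k)
        by (field; lra).
      apply Rmult_le_compat_r; lra. }
    assert (0 <= u) by (unfold u; pose proof (pos_INR cnt); nra).
    assert (u * c <= K * (eps / (2 * K))) by (apply Rmult_le_compat; unfold K in *; lra).
    replace (K * (eps / (2 * K))) with (eps / 2) in * by (unfold K; field; lra).
    replace (INR cnt * ((1 + c) * / scale k)) with (u + u * c) by (unfold u; ring).
    lra.
Qed.

Lemma graph_H1_le_outer (X : R -> Prop) (M : R) :
  leb_outer_le X M -> H1_le (graph_over g m X) M.
Proof.
  intros HS. apply H1_le_of_covers. intros delta eps Hd He.
  destruct (HS (eps / 2) ltac:(lra)) as [a [b [Hab [HSab Hsum]]]].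
  exists (fun i => graph_over g m (fun x => a i <= x <= b i)),
         (fun i => b i - a i + eps / 2 * (/2) ^ S i).
  split; [|split].
  - intros [x y] [Hx Hr]. destruct (HSab x Hx) as [i Hi]. exists i. split; assumption.
  - intros i. apply interval_cover; auto. pose proof (pow_lt (/2) (S i) ltac:(lra)). nra.
  - intros n. rewrite sum_plus.
    replace (sum_f_R0 (fun i => eps / 2 * (/2) ^ S i) n)
      with (eps / 2 * sum_f_R0 (fun i => (/2) ^ S i) n)
      by (rewrite scal_sum; apply sum_eq; intros; ring).
    rewrite sum_half_powers.
    specialize (Hsum n). pose proof (pow_lt (/2) (S n) ltac:(lra)). nra.
Qed.

End Construction.

Lemma in01_outer_le_1 : leb_outer_le in01 1.
Proof.
  intros eps He. exists (fun _ => 0), (fun i => match i with O => 1 | _ => 0 end).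
  split; [|split].
  - intros [|i]; lra.
  - intros x Hx. exists O. exact Hx.
  - intros n. induction n; simpl in *; lra.
Qed.

Theorem lemma2p2 (g : nat -> R) (m : nat -> nat)
  (g_pos : forall k, (1 <= k)%nat -> 0 < g k)
  (g_incr : forall k, (1 <= k)%nat -> g k < g (S k))
  (g_inf : forall B : R, exists K, forall k, (K <= k)%nat -> B < g k)
  (m_pos : forall k, (1 <= k)%nat -> (1 <= m k)%nat)
  (m_incr : forall k, (2 <= k)%nat -> (m (pred k) < m k)%nat)
  (m_cond1 : forall k, (2 <= k)%nat ->
     1000 / 4 ^ m k <= acoef g k / 4 ^ m (pred k))
  (m_cond2 : forall k, (2 <= k)%nat ->
     1000 / 4 ^ m k <= acoef g (pred k) / 4 ^ m (pred k)) :
  (forall (S : R -> Prop), (forall x, S x -> in01 x) -> leb_measurable S ->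
     forall M : R, leb_outer_le S M -> H1_le (graph_over g m S) M) /\
  H1_le (graph_over g m in01) 1 /\
  (forall (N : R -> Prop), (forall x, N x -> in01 x) -> leb_outer_le N 0 ->
     H1_le (graph_over g m N) 0).
Proof.
  pose proof (graph_H1_le_outer g m g_pos g_incr m_pos m_incr m_cond1 m_cond2) as Hgraph.
  split; [|split].
  - intros S _ _ M HM. apply Hgraph, HM.
  - apply Hgraph, in01_outer_le_1.
  - intros N _ HN. apply Hgraph, HN.
Qed.
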